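(* Let $A,B,C,D,E\in\mathbb{C}$, $P(x)=A+4Bx+6Cx^2+4Dx^3+Ex^4$, $R(x,y)=A+2B(x+y)+3C(x^2+y^2)+2Dxy(x+y)+Ex^2y^2$, and $$\hat R(x,y)=-4B^2+4(AD-3BC)(x+y)+2(AE+2BD-9C^2)(x^2+y^2)+4(BE-3CD)xy(x+y)-4D^2x^2y^2-(AE+4BD-9C^2)(x-y)^2.$$ For $\theta\in\mathbb{C}$ let $\Phi_\theta(x,y)=-(x-y)^2\theta^2+2R(x,y)\theta+\hat R(x,y)$, and write $\Phi_\theta(x,y)=a_\theta(x)y^2+2b_\theta(x)y+c_\theta(x)$ with $a_\theta,b_\theta,c_\theta$ polynomials in $x$. Let $G_\theta=b_\theta^2-a_\theta c_\theta$. Then $G_\theta(x)=p(\theta)P(x)$, where $$p(\theta)=2\theta(\theta-3C)^2+2\theta(4BD-AE)+4B^2E+4AD^2-24BCD.$$ *)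

From mathcomp Require Import all_boot all_algebra.
From mathcomp Require Import reals complex.
Set Implicit Arguments. Unset Strict Implicit. Unset Printing Implicit Defensive.
Import GRing.Theory Num.Theory.
Local Open Scope ring_scope.
Local Open Scope complex_scope.

Section Defs.
Variable R : realType.
Local Notation C := R[i].
Variables A B C' D E : C.

Definition Pq (x : C) : C := A + 4 * B * x + 6 * C' * x ^+ 2 + 4 * D * x ^+ 3 + E * x ^+ 4.

Definition Rq (x y : C) : C :=
  A + 2 * B * (x + y) + 3 * C' * (x ^+ 2 + y ^+ 2) + 2 * D * x * y * (x + y)
  + E * x ^+ 2 * y ^+ 2.

Definition Rhat (x y : C) : C :=
  - 4 * B ^+ 2 + 4 * (A * D - 3 * B * C') * (x + y)
  + 2 * (A * E + 2 * B * D - 9 * C' ^+ 2) * (x ^+ 2 + y ^+ 2)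
  + 4 * (B * E - 3 * C' * D) * x * y * (x + y)
  - 4 * D ^+ 2 * x ^+ 2 * y ^+ 2
  - (A * E + 4 * B * D - 9 * C' ^+ 2) * (x - y) ^+ 2.

Definition Phi (theta x y : C) : C :=
  - (x - y) ^+ 2 * theta ^+ 2 + 2 * Rq x y * theta + Rhat x y.

Definition pth (theta : C) : C :=
  2 * theta * (theta - 3 * C') ^+ 2 + 2 * theta * (4 * B * D - A * E)
  + 4 * B ^+ 2 * E + 4 * A * D ^+ 2 - 24 * B * C' * D.

End Defs.

(* For fixed x, the values of y |-> Phi theta x y at y = 0, 1, -1 determine
   c, 4 b and 2 a, hence 16 (b^2 - a c); substituting the explicit values of
   Phi turns the claim into a polynomial identity in A, B, C, D, E, theta, x. *)
From mathcomp Require Import all_boot all_algebra.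
From mathcomp Require Import reals complex.
From mathcomp Require Import ring.
Import GRing.Theory Num.Theory.
Local Open Scope ring_scope.

Lemma quadratic_discriminant_from_values {T : comNzRingType} {a b c : T}
    {q : T -> T} :
  (forall y, q y = a * y ^+ 2 + 2 * b * y + c) ->
  16 * (b ^+ 2 - a * c) =
    (q 1 - q (-1)) ^+ 2 - 8 * (q 1 + q (-1) - 2 * q 0) * q 0.
Proof. by move=> qE; rewrite !qE; ring. Qed.

Lemma Phi_values_discriminant (R : realType) (A B C D E theta x : R[i]) :
  let q := Phi A B C D E theta x in
  (q 1 - q (-1)) ^+ 2 - 8 * (q 1 + q (-1) - 2 * q 0) * q 0 =
    16 * (pth A B C D E theta * Pq A B C D E x).
Proof. by rewrite /Phi /Rq /Rhat /pth /Pq; ring. Qed.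

Theorem theorem5 (R : realType) (A B C D E theta : R[i])
  (a b c : {poly R[i]})
  (habc : forall x y : R[i],
     Phi A B C D E theta x y = a.[x] * y ^+ 2 + 2 * b.[x] * y + c.[x]) :
  forall x : R[i],
    b.[x] ^+ 2 - a.[x] * c.[x] = pth A B C D E theta * Pq A B C D E x.
Proof.
move=> x.
have n16 : (16 : R[i]) != 0 by rewrite pnatr_eq0.
apply: (mulfI n16).
rewrite (quadratic_discriminant_from_values (habc x)).
exact: Phi_values_discriminant.
Qed.
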